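(* Let $\pi$ be a probability measure on $\mathcal{B}_n=\{0,1\}^n$ and let $L$ be the generator of a $\pi$-reversible flip-swap random walk on $\mathcal{B}_n$ which is $R$-stable for some $R\ge0$. Let $f\colon\mathcal{B}_n\to\mathbb{R}$ and $\alpha\in[0,\infty)^n$ be such that $|f(x)-f(y)|\le d_\alpha(x,y)$ for all $x,y\in\mathcal{B}_n$. Then for all $t>0$, \[ \pi\big(f>\pi(f)+t\big)\le\exp\Big(-\frac{t^2}{8R|\alpha|^2}\Big). \] In this estimate one can also replace $8|\alpha|^2$ with $16\sum_{i=1}^{\lceil\Delta(L)/R\rho(L)\rceil}(\alpha_i^{\downarrow})^2$.
   Context: A generator on $\mathcal{B}_n$ is a real matrix $L=(L(x,y))_{x,y\in\mathcal{B}_n}$ with $L(x,y)\ge0$ for $x\neq y$ and $\sum_yL(x,y)=0$ for all $x$; it is $\pi$-reversible if $\pi(x)L(x,y)=\pi(y)L(y,x)$ for all $x,y$ (so $\pi$ is stationary). Write $(Lg)(x)=\sum_yL(x,y)g(y)$, $\mathcal{E}(f,g)=-\sum_x\pi(x)f(x)(Lg)(x)$, $\mathrm{Ent}_\pi(f)=\pi(f\log f)-\pi(f)\log\pi(f)$ (with $0\log0=0$), and let $\rho(L)$ be the largest constant such that $\rho(L)\mathrm{Ent}_\pi(f)\le\mathcal{E}(f,\log f)$ for all non-constant $f\colon\mathcal{B}_n\to[0,\infty)$ (the modified log-Sobolev inequality). $\Delta(L)=\max_x(-L(x,x))$. $L$ generates a flip-swap random walk if $L(x,y)>0$ for $x\ne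 y$ implies that $y$ is obtained from $x$ by flipping one coordinate or by swapping two coordinates $x_i\neq x_j$. $L$ is $R$-stable if it satisfies the modified log-Sobolev inequality ($\rho(L)>0$) and $\max_{x\in\mathrm{supp}\,\pi,\,i\in[n]}\sum_{y:y_i\ne x_i}L(x,y)\le R\rho(L)$. $d_\alpha(x,y)=\sum_i\alpha_i\mathbf{1}\{x_i\ne y_i\}$, $|\alpha|$ Euclidean norm, $\alpha^{\downarrow}$ non-increasing rearrangement, $\pi(f)=\int f\,d\pi$. *)

From HB Require Import structures.
From mathcomp Require Import all_boot all_order all_algebra.
From mathcomp Require Import all_classical all_reals all_analysis.
Set Implicit Arguments. Unset Strict Implicit. Unset Printing Implicit Defensive.
Import Order.TTheory GRing.Theory Num.Theory.
Local Open Scope ring_scope.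

Notation cube n := {ffun 'I_n -> bool}.

Section Defs.
Variables (R : realType) (n : nat).
Local Notation B := (cube n).

Definition is_prob (pi : B -> R) := (forall x, 0 <= pi x) /\ \sum_x pi x = 1.

Definition is_generator (L : B -> B -> R) :=
  (forall x y, x != y -> 0 <= L x y) /\ (forall x, \sum_y L x y = 0).

Definition reversible (pi : B -> R) (L : B -> B -> R) :=
  forall x y, pi x * L x y = pi y * L y x.

Definition flip_of (x y : B) (i : 'I_n) :=
  y i != x i /\ (forall k, k != i -> y k = x k).

Definition swap_of (x y : B) (i j : 'I_n) :=
  [/\ x i != x j, y i = x j, y j = x i & forall k, k != i -> k != j -> y k = x k].

Definition flip_swap (L : B -> B -> R) :=
  forall x y, x != y -> 0 < L x y ->
    (exists i, flip_of x y i) \/ (exists i j, swap_of x y i j).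

Definition gen_app (L : B -> B -> R) (g : B -> R) (x : B) := \sum_y L x y * g y.
Definition dirichlet (pi : B -> R) (L : B -> B -> R) (f g : B -> R) :=
  - \sum_x pi x * f x * gen_app L g x.
Definition mean (pi : B -> R) (f : B -> R) := \sum_x pi x * f x.
Definition ent (pi : B -> R) (f : B -> R) :=
  mean pi (fun x => f x * ln (f x)) - mean pi f * ln (mean pi f).

Definition nonconstant (f : B -> R) := exists x y, f x != f y.

Definition mlsi (pi : B -> R) (L : B -> B -> R) (c : R) :=
  forall f : B -> R, (forall x, 0 < f x) -> nonconstant f ->
    c * ent pi f <= dirichlet pi L f (fun x => ln (f x)).

Definition is_mlsi_const (pi : B -> R) (L : B -> B -> R) (rho : R) :=
  mlsi pi L rho /\ forall c, mlsi pi L c -> c <= rho.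

(* Delta(L) = max_x (-L(x,x)) (nonnegative for a generator) *)
Definition Delta (L : B -> B -> R) : R := \big[Num.max/0]_x (- L x x).

(* R-stability, with rho = rho(L) *)
Definition stable (pi : B -> R) (L : B -> B -> R) (rho Rs : R) :=
  0 < rho /\
  forall x, 0 < pi x -> forall i : 'I_n,
    \sum_(y : B | y i != x i) L x y <= Rs * rho.

Definition d_alpha (alpha : 'I_n -> R) (x y : B) : R :=
  \sum_i alpha i * (x i != y i)%:R.

Definition sqnorm (alpha : 'I_n -> R) : R := \sum_i alpha i ^+ 2.

(* sum_{i=1}^k (alpha^down_i)^2 : sum of squares of the k largest entries
   (all entries if k >= n) *)
Definition top_sqsum (alpha : 'I_n -> R) (k : nat) : R :=
  \sum_(a <- take k (sort (fun a b : R => b <= a) [seq alpha i | i : 'I_n])) a ^+ 2.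

Definition prob_gt (pi : B -> R) (f : B -> R) (m : R) : R :=
  \sum_(x | m < f x) pi x.

End Defs.

From HB Require Import structures.
From mathcomp Require Import all_boot all_order all_algebra.
From mathcomp Require Import all_classical all_reals all_analysis.
From mathcomp Require Import ring lra.
Set Implicit Arguments. Unset Strict Implicit. Unset Printing Implicit Defensive.
Import Order.TTheory GRing.Theory Num.Theory.
Local Open Scope ring_scope.

(* Herbst's argument.  For the centred F = f - pi(f) put Z(l) = pi(e^(l F)).
   Reversibility gives E(e^g, g) <= sum_x pi(x) e^(g x) sum_y L(x,y) (g y - g x)^2,
   so the modified log-Sobolev inequality applied to e^(l F) yields
   Ent(e^(l F)) <= C l^2 Z(l) as soon as the local energy
   sum_y L(x,y) (f y - f x)^2 is at most rho C on the support of pi.  This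
   differential inequality says that ln Z(l) / l - C l is nonincreasing; it
   tends to 0 as l -> 0+, hence ln Z(l) <= C l^2, and the Chernoff bound gives
   the tail exp(- t^2 / 4C).

   A flip or a swap changes at most two coordinates, so by Cauchy-Schwarz the
   local energy at x is at most 2 sum_i alpha_i^2 w_i(x), where w_i(x) is the
   total rate of the jumps from x that change coordinate i.  R-stability bounds
   each w_i(x) by R rho, which gives C = 2 R |alpha|^2.  Moreover
   sum_i w_i(x) <= - 2 L(x,x) <= 2 k R rho with k = ceil(Delta(L) / R rho), and
   under these constraints sum_i alpha_i^2 w_i(x) is at most 2 R rho times the
   sum of the k largest alpha_i^2, which gives the second bound. *)

Section RealFacts.
Variable R : realType.

Lemma is_derive_bigsum (T : finType) (g : T -> R -> R) (dg : T -> R) (l : R) :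
  (forall x, is_derive l 1 (g x) (dg x)) ->
  is_derive l 1 (fun y => \sum_x g x y) (\sum_x dg x).
Proof.
move=> dgx; rewrite [X in is_derive _ _ X](_ : _ = \sum_x g x); last first.
  by apply/funext => y; rewrite fct_sumE.
by elim/big_ind2: _ => // [|? ? ? ? ? ?]; [exact: is_derive_cst | exact: is_deriveD].
Qed.

Lemma expR_sub1_sub_le (u : R) : u <= 1/2 -> expR u - 1 - u <= 2 * u ^+ 2.
Proof.
move=> u_le; have := expR_gt0 u.
have : expR u * (1 - u) <= 1.
  rewrite -[X in _ <= X](mulfV (lt0r_neq0 (expR_gt0 u))) -expRN.
  by rewrite ler_wpM2l ?expR_ge0 ?expR_ge1Dx.
nra.
Qed.

Lemma expR_sub_mul_le (a b : R) :
  (expR a - expR b) * (a - b) <= (expR a + expR b) * (a - b) ^+ 2.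
Proof.
have tangent (x y : R) : expR x - expR y <= expR x * (x - y).
  have e : expR x * expR (y - x) = expR y by rewrite -expRD addrC subrK.
  have := expR_ge1Dx (y - x); rewrite -(ler_pM2l (expR_gt0 x)) e.
  by rewrite mulrDr mulr1 mulrBr; lra.
have key (x y : R) : y <= x -> (expR x - expR y) * (x - y) <= expR x * (x - y) ^+ 2.
  by move=> yx; rewrite expr2 mulrA ler_wpM2r ?subr_ge0.
case: (leP b a) => [ba|/ltW ab].
- by apply: le_trans (key _ _ ba) _; rewrite ler_wpM2r ?sqr_ge0 // lerDl expR_ge0.
- rewrite -mulrNN !opprB -sqrrN opprB.
  by apply: le_trans (key _ _ ab) _; rewrite ler_wpM2r ?sqr_ge0 // lerDr expR_ge0.
Qed.

Lemma sqr_sum_le_mul_sum (T : finType) (a w : T -> R) : (forall i, 0 <= w i) ->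
  (\sum_i a i * w i) ^+ 2 <= (\sum_i w i) * \sum_i a i ^+ 2 * w i.
Proof.
move=> w_ge0; rewrite -subr_ge0.
set S := \sum_i \sum_j (w i * (a j ^+ 2 * w j) - a i * w i * (a j * w j)).
have -> : (\sum_i w i) * (\sum_i a i ^+ 2 * w i) - (\sum_i a i * w i) ^+ 2 = S.
  by rewrite expr2 !big_distrlr -sumrB; apply: eq_bigr => i _; rewrite -sumrB.
have : 0 <= S + S.
  rewrite {1}/S exchange_big -big_split /=; apply: sumr_ge0 => i _.
  rewrite -big_split /=; apply: sumr_ge0 => j _.
  rewrite [X in 0 <= X](_ : _ = w i * w j * (a i - a j) ^+ 2); last by ring.
  by apply: mulr_ge0; [exact: mulr_ge0 | exact: sqr_ge0].
lra.
Qed.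

Lemma mul_le_max_sub (a w M tau : R) : 0 <= w <= M ->
  a * w <= M * Num.max (a - tau) 0 + tau * w.
Proof.
case/andP=> w0 wM; case: (leP tau a) => [ta|/ltW a_le].
  by rewrite max_l ?subr_ge0 //; nra.
by rewrite max_r ?subr_le0 // mulr0 add0r ler_wpM2r.
Qed.

End RealFacts.

Section MomentGeneratingFunction.
Variables (R : realType) (T : finType) (pi F : T -> R).

Definition mgf (l : R) := \sum_x pi x * expR (l * F x).
Definition dmgf (l : R) := \sum_x pi x * (F x * expR (l * F x)).

Lemma is_derive_mgf (l : R) : is_derive l 1 mgf (dmgf l).
Proof.
apply: is_derive_bigsum => x; apply: is_derive_eq.
by rewrite scaler0 add0r /GRing.scale /= mulr1 [F x * _]mulrC.
Qed.

Hypotheses (pi_ge0 : forall x, 0 <= pi x) (pi_sum1 : \sum_x pi x = 1)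
  (F_centred : \sum_x pi x * F x = 0).

Lemma mgf_ge1 (l : R) : 1 <= mgf l.
Proof.
have lin : \sum_x pi x * (1 + l * F x) = 1.
  under eq_bigr do rewrite mulrDr mulr1 mulrCA.
  by rewrite big_split /= -mulr_sumr F_centred mulr0 addr0 pi_sum1.
by rewrite -lin; apply: ler_sum => x _; rewrite ler_wpM2l ?expR_ge1Dx.
Qed.

Lemma mgf_gt0 (l : R) : 0 < mgf l.
Proof. exact: lt_le_trans ltr01 (mgf_ge1 l). Qed.

Lemma chernoff_tail (c t : R) : 0 < c ->
  (forall l, 0 < l -> ln (mgf l) <= c * l ^+ 2) -> 0 < t ->
  \sum_(x | t < F x) pi x <= expR (- (t ^+ 2 / (4 * c))).
Proof.
move=> c0 ln_mgf_le t0; set l := t / (2 * c).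
have l0 : 0 < l by rewrite divr_gt0 // mulr_gt0.
apply: le_trans (_ : \sum_x pi x * expR (l * F x - l * t) <= _).
  rewrite big_mkcond /=; apply: ler_sum => x _; case: ifP => [tF|_].
    by rewrite -[X in X <= _]mulr1 ler_wpM2l // -expR0 ler_expR subr_ge0 ler_wpM2l ?ltW.
  by rewrite mulr_ge0 ?expR_ge0.
have -> : \sum_x pi x * expR (l * F x - l * t) = expR (- (l * t) + ln (mgf l)).
  rewrite expRD lnK ?posrE ?mgf_gt0 // /mgf mulr_sumr.
  by apply: eq_bigr => x _; rewrite expRD; ring.
rewrite ler_expR (_ : - (t ^+ 2 / (4 * c)) = - (l * t) + c * l ^+ 2).
  by rewrite lerD2l ln_mgf_le.
by rewrite /l; field; rewrite lt0r_neq0.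
Qed.

Let Fnorm := \sum_x `|F x|.

Let ln_mgf_le_small (l : R) : 0 <= l -> l * Fnorm <= 1/2 ->
  ln (mgf l) <= 2 * l ^+ 2 * Fnorm ^+ 2.
Proof.
move=> l0 lF.
have mgf_sub1 : mgf l - 1 = \sum_x pi x * (expR (l * F x) - 1 - l * F x).
  have e : \sum_x pi x * (expR (l * F x) - 1 - l * F x)
      = mgf l - \sum_x pi x - l * \sum_x pi x * F x.
    by rewrite /mgf mulr_sumr -!sumrB; apply: eq_bigr => x _; ring.
  by rewrite e pi_sum1 F_centred mulr0 subr0.
have ln_le : ln (mgf l) <= mgf l - 1.
  by rewrite -[X in ln X](subrK 1) addrC le_ln1Dx // (lt_le_trans (ltrN10 R)) // subr_ge0 mgf_ge1.
apply: le_trans ln_le _.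
rewrite mgf_sub1 -[X in _ <= X]mul1r -[X in _ <= X * _]pi_sum1 mulr_suml.
apply: ler_sum => x _; rewrite ler_wpM2l //.
have Fx_le : `|F x| <= Fnorm by rewrite /Fnorm (bigD1 x) //= lerDl sumr_ge0.
have lFx_le : l * F x <= 1/2.
  by apply: le_trans (ler_norm _) (le_trans _ lF); rewrite normrM ger0_norm ?ler_wpM2l.
apply: le_trans (expR_sub1_sub_le lFx_le) _.
rewrite exprMn mulrA ler_wpM2l ?mulr_ge0 ?sqr_ge0 // -real_normK ?num_real //.
by have := normr_ge0 (F x); nra.
Qed.

Section Herbst.
Variable c : R.
Hypotheses (c_ge0 : 0 <= c) (ent_mgf_le : forall l, 0 < l ->
  l * dmgf l - mgf l * ln (mgf l) <= c * l ^+ 2 * mgf l).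

Let herbst_fun (l : R) := ln (mgf l) / l - c * l.

Let herbst_fun_nincr (a b : R) : 0 < a -> a <= b -> herbst_fun b <= herbst_fun a.
Proof.
move=> a0; rewrite le_eqVlt => /predU1P[<- //|ab].
pose d (l : R) := (l * dmgf l - mgf l * ln (mgf l) - c * l ^+ 2 * mgf l) / (l ^+ 2 * mgf l).
have d_le0 (l : R) : 0 < l -> d l <= 0.
  move=> l0; rewrite /d mulr_le0_ge0 ?subr_le0 ?ent_mgf_le //.
  by rewrite invr_ge0 mulr_ge0 ?sqr_ge0 ?ltW ?mgf_gt0.
have der (l : R) : 0 < l -> is_derive l 1 herbst_fun (d l).
  move=> l0.
  have dlnZ : is_derive l 1 (fun y => ln (mgf y)) ((mgf l)^-1 * dmgf l).
    exact: is_derive1_comp (is_derive1_ln (mgf_gt0 l)) (is_derive_mgf l).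
  have dinv : is_derive l 1 (fun y : R => y^-1) (- l ^- 2).
    have := @is_deriveV R id l 1 1 (lt0r_neq0 l0) (is_derive_id _ _).
    by rewrite /GRing.scale /= mulr1.
  apply: is_derive_eq; rewrite /GRing.scale /= mulr1 /d.
  by field; rewrite ?lt0r_neq0 ?mgf_gt0.
have pos (x : R) : x \in `]a, b[ -> 0 < x by rewrite in_itv => /andP[/(lt_trans a0)].
rewrite -subr_le0.
have dab : {in `[a, b], forall x, derivable herbst_fun x 1}.
  by move=> x /[!in_itv] /= /andP[ax _]; case: (der x (lt_le_trans a0 ax)).
have [x /pos x0 ->] := MVT ab (fun x ax => der x (pos x ax)) (derivable_within_continuous dab).
by rewrite mulr_le0_ge0 ?d_le0 // subr_ge0 ltW.
Qed.

Let herbst_fun_le0 (l : R) : 0 < l -> herbst_fun l <= 0.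
Proof.
(* [herbst_fun] is nonincreasing and [herbst_fun k <= 2 k Fnorm ^+ 2] for small [k]. *)
move=> l0; apply/ler_addgt0Pr => e e0; rewrite add0r.
have F0 : 0 <= Fnorm by apply: sumr_ge0 => x _.
set k := Num.min l (Num.min (2 * (Fnorm + 1))^-1 (e / (2 * (Fnorm ^+ 2 + 1)))).
have k0 : 0 < k by rewrite !lt_min l0 invr_gt0 !divr_gt0 ?mulr_gt0 ?ltr_wpDl ?sqr_ge0.
have [kl kF ke] : [/\ k <= l, k * (2 * (Fnorm + 1)) <= 1 & k * (2 * (Fnorm ^+ 2 + 1)) <= e].
  have := lexx k; rewrite {2}/k !le_min => /and3P[-> ? ?].
  by rewrite -!ler_pdivlMr ?mul1r ?mulr_gt0 ?ltr_wpDl ?sqr_ge0.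
apply: le_trans (herbst_fun_nincr k0 kl) _.
have small : ln (mgf k) <= 2 * k ^+ 2 * Fnorm ^+ 2.
  by apply: ln_mgf_le_small; [exact: ltW | lra].
have : ln (mgf k) / k <= 2 * k * Fnorm ^+ 2.
  by rewrite ler_pdivrMr // [X in _ <= X](_ : _ = 2 * k ^+ 2 * Fnorm ^+ 2) //; ring.
have := mulr_ge0 c_ge0 (ltW k0); rewrite /herbst_fun; nra.
Qed.

Lemma herbst (l : R) : 0 < l -> ln (mgf l) <= c * l ^+ 2.
Proof.
move=> l0; have := herbst_fun_le0 l0.
by rewrite /herbst_fun subr_le0 ler_pdivrMr // -mulrA -expr2.
Qed.

End Herbst.
End MomentGeneratingFunction.

Section Concentration.
Variables (R : realType) (n : nat).
Local Notation B := (cube n).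
Variables (pi : B -> R) (L : B -> B -> R).
Hypotheses (pi_prob : is_prob pi) (L_gen : is_generator L) (L_rev : reversible pi L).

Lemma dirichlet_exp_le (g : B -> R) :
  dirichlet pi L (fun x => expR (g x)) g <=
  \sum_x pi x * expR (g x) * \sum_y L x y * (g y - g x) ^+ 2.
Proof.
have [L_ge0 L_sum0] := L_gen.
pose a x y := pi x * L x y.
have a_sym x y : a x y = a y x by rewrite /a L_rev.
have swap (h : B -> B -> R) : \sum_x \sum_y a x y * h x y = \sum_x \sum_y a x y * h y x.
  by rewrite exchange_big; apply: eq_bigr => x _; apply: eq_bigr => y _; rewrite a_sym.
set U := \sum_x \sum_y a x y * (expR (g x) * (g x - g y)).
set P := \sum_x \sum_y a x y * (expR (g x) * (g x - g y) ^+ 2).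
have -> : dirichlet pi L (fun x => expR (g x)) g = U.
  rewrite /dirichlet /gen_app -sumrN; apply: eq_bigr => x _.
  have -> : \sum_y L x y * g y = \sum_y L x y * (g y - g x).
    by under [RHS]eq_bigr do rewrite mulrBr; rewrite sumrB -mulr_suml L_sum0 mul0r subr0.
  by rewrite mulr_sumr -sumrN; apply: eq_bigr => y _; rewrite /a; ring.
have -> : \sum_x pi x * expR (g x) * \sum_y L x y * (g y - g x) ^+ 2 = P.
  by apply: eq_bigr => x _; rewrite mulr_sumr; apply: eq_bigr => y _; rewrite /a; ring.
suff : U + U <= P + P by lra.
rewrite {2}/U {2}/P (swap (fun x y => expR (g x) * (g x - g y))).
rewrite (swap (fun x y => expR (g x) * (g x - g y) ^+ 2)) -!big_split /=.
apply: ler_sum => x _.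
rewrite -!big_split /=; apply: ler_sum => y _.
have [<-|xy] := eqVneq x y; first by rewrite subrr expr0n /= !mulr0 addr0.
rewrite -!mulrDr ler_wpM2l ?mulr_ge0 ?L_ge0 ?(pi_prob.1) //.
have := expR_sub_mul_le (g x) (g y); lra.
Qed.

Lemma mlsi_ent_le (rho : R) : mlsi pi L rho -> forall h : B -> R, (forall x, 0 < h x) ->
  rho * ent pi h <= dirichlet pi L h (fun x => ln (h x)).
Proof.
(* [mlsi] only constrains nonconstant functions; for a constant one both sides vanish. *)
move=> ml h h_gt0; have [nc|h_const] := pselect (nonconstant h).
  exact: ml.
set h0 := h [ffun => false].
have -> : h = fun=> h0.
  by apply/funext => x; apply/eqP; apply: contra_notT h_const => hx; exists x, [ffun => false].
have mean_const (k : R) : mean pi (fun=> k) = k by rewrite /mean -mulr_suml pi_prob.2 mul1r.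
rewrite /ent !mean_const subrr mulr0 /dirichlet big1 ?oppr0 // => x _.
by rewrite /gen_app -mulr_suml L_gen.2 mul0r mulr0.
Qed.

Lemma ent_exp (F : B -> R) (l : R) :
  ent pi (fun x => expR (l * F x)) = l * dmgf pi F l - mgf pi F l * ln (mgf pi F l).
Proof.
rewrite /ent /mean /dmgf /mgf; congr (_ - _).
by rewrite mulr_sumr; apply: eq_bigr => x _; rewrite expRK; ring.
Qed.

Lemma ent_exp_le (rho C : R) (F : B -> R) : mlsi pi L rho -> 0 < rho ->
  (forall x, 0 < pi x -> \sum_y L x y * (F y - F x) ^+ 2 <= rho * C) ->
  forall l, 0 < l ->
  l * dmgf pi F l - mgf pi F l * ln (mgf pi F l) <= C * l ^+ 2 * mgf pi F l.
Proof.
move=> ml rho0 energy l l0.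
rewrite -ent_exp -(ler_pM2l rho0).
apply: le_trans (mlsi_ent_le ml (fun x => expR_gt0 _)) _.
have -> : (fun x => ln (expR (l * F x))) = (fun x => l * F x).
  by apply/funext => x; rewrite expRK.
apply: le_trans (dirichlet_exp_le _) _.
rewrite /mgf !mulr_sumr; apply: ler_sum => x _.
have [->|pxn0] := eqVneq (pi x) 0; first by rewrite !mul0r !mulr0.
have px : 0 < pi x by rewrite lt_def pxn0 pi_prob.1.
have -> : \sum_y L x y * (l * F y - l * F x) ^+ 2 = l ^+ 2 * \sum_y L x y * (F y - F x) ^+ 2.
  by rewrite mulr_sumr; apply: eq_bigr => y _; ring.
rewrite [X in _ <= X](_ : _ = pi x * expR (l * F x) * (l ^+ 2 * (rho * C))); last by ring.
by rewrite ler_wpM2l ?mulr_ge0 ?expR_ge0 ?pi_prob.1 // ler_wpM2l ?sqr_ge0 ?energy.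
Qed.

Lemma concentration_of_local_energy (rho C : R) (f : B -> R) :
  mlsi pi L rho -> 0 < rho -> 0 <= C ->
  (forall x, 0 < pi x -> \sum_y L x y * (f y - f x) ^+ 2 <= rho * C) ->
  forall t, 0 < t -> prob_gt pi f (mean pi f + t) <= expR (- (t ^+ 2 / (4 * C))).
Proof.
move=> ml rho0 C0 energy t t0; have [pi_ge0 pi_sum1] := pi_prob.
have [->|Cn0] := eqVneq C 0.
  (* [t ^+ 2 / (4 * 0) = 0], so the bound is [expR 0 = 1]. *)
  rewrite mulr0 invr0 mulr0 oppr0 expR0 -pi_sum1 /prob_gt.
  by rewrite [X in _ <= X](bigID (fun x => mean pi f + t < f x)) /= lerDl sumr_ge0.
pose F x := f x - mean pi f.
have F_centred : \sum_x pi x * F x = 0.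
  rewrite /F; under eq_bigr do rewrite mulrBr.
  by rewrite sumrB -mulr_suml pi_sum1 mul1r subrr.
have ent_le : forall l, 0 < l ->
    l * dmgf pi F l - mgf pi F l * ln (mgf pi F l) <= C * l ^+ 2 * mgf pi F l.
  apply: (ent_exp_le ml rho0) => x px.
  by under eq_bigr do rewrite /F opprB addrA subrK; exact: energy.
have C_gt0 : 0 < C by rewrite lt_def Cn0.
have := chernoff_tail pi_ge0 pi_sum1 F_centred C_gt0 (herbst pi_ge0 pi_sum1 F_centred C0 ent_le) t0.
by rewrite /prob_gt; under eq_bigl do rewrite /F ltrBrDl.
Qed.

End Concentration.

Section FlipSwap.
Variables (R : realType) (n : nat).
Local Notation B := (cube n).
Variable L : B -> B -> R.
Hypotheses (L_gen : is_generator L) (L_fs : flip_swap L).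

Definition change_rate (x : B) (i : 'I_n) := \sum_(y : B | y i != x i) L x y.
Definition hamming (x y : B) : R := \sum_i (x i != y i)%:R.

Lemma change_rate_ge0 x i : 0 <= change_rate x i.
Proof. by apply: sumr_ge0 => y yi; apply: L_gen.1; move: yi; apply: contra_neq => ->. Qed.

Lemma sum_mul_change_rateE (a : 'I_n -> R) x :
  \sum_i a i * change_rate x i = \sum_y L x y * \sum_i a i * (x i != y i)%:R.
Proof.
under [RHS]eq_bigr do rewrite mulr_sumr.
rewrite [RHS]exchange_big; apply: eq_bigr => i _.
rewrite /change_rate mulr_sumr big_mkcond; apply: eq_bigr => y _ /=.
by rewrite eq_sym; case: (x i != y i); rewrite ?mulr1 ?mulr0 // mulrC.
Qed.

Definition weighted_rate (alpha : 'I_n -> R) (x : B) := \sum_i alpha i ^+ 2 * change_rate x i.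

Lemma flip_swap_hamming_le2 x y : x != y -> 0 < L x y -> hamming x y <= 2.
Proof.
move=> xy Lxy.
have [i [j changed]] : exists i j, forall k, x k != y k -> k \in [set i; j].
  case: (L_fs xy Lxy) => [[i [_ fixed]] | [i [j [_ _ _ fixed]]]];
    [exists i, i | exists i, j] => k; apply: contraR; rewrite !inE negb_or => /andP[ki kj];
    by rewrite fixed // eqxx.
have -> : hamming x y = #|[pred k | x k != y k]|%:R.
  rewrite /hamming -sum1_card natr_sum [RHS]big_mkcond.
  by apply: eq_bigr => k _; rewrite inE; case: (x k != y k).
rewrite ler_nat (leq_trans (subset_leq_card (_ : _ \subset [set i; j]))) //.
  by apply/fintype.subsetP => k; exact: changed.
by rewrite cards2; case: (i != j).
Qed.

Lemma local_energy_le (alpha : 'I_n -> R) (f : B -> R) :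
  (forall x y, `|f x - f y| <= d_alpha alpha x y) ->
  forall x, \sum_y L x y * (f y - f x) ^+ 2 <= 2 * weighted_rate alpha x.
Proof.
move=> lip x; rewrite /weighted_rate sum_mul_change_rateE mulr_sumr; apply: ler_sum => y _.
have [<-|xy] := eqVneq x y.
  by rewrite subrr expr0n mulr0 big1 ?mulr0 // => i _; rewrite eqxx mulr0.
have [->|Lxy_neq0] := eqVneq (L x y) 0; first by rewrite !mul0r mulr0.
have Lxy_gt0 : 0 < L x y by rewrite lt_def Lxy_neq0 L_gen.1.
rewrite [X in _ <= X]mulrCA; apply: ler_wpM2l; first exact: ltW.
have d_sq : (f y - f x) ^+ 2 <= d_alpha alpha x y ^+ 2.
  by have := lip x y; rewrite ler_norml => /andP[? ?]; nra.
apply: le_trans d_sq _; rewrite /d_alpha.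
apply: le_trans (sqr_sum_le_mul_sum _ (fun i => ler0n _ _)) _.
apply: ler_wpM2r; last exact: flip_swap_hamming_le2.
by apply: sumr_ge0 => i _; rewrite mulr_ge0 ?sqr_ge0 ?ler0n.
Qed.

Lemma sum_change_rate_le x : \sum_i change_rate x i <= 2 * - L x x.
Proof.
have [L_ge0 L_sum0] := L_gen.
under eq_bigr do rewrite -[change_rate x _]mul1r.
rewrite sum_mul_change_rateE (bigD1 x) //= big1 ?mulr0 ?add0r => [|i _]; last first.
  by rewrite eqxx mulr0.
have := L_sum0 x; rewrite (bigD1 x) //= addrC => /eqP; rewrite addr_eq0 => /eqP <-.
rewrite mulr_sumr; apply: ler_sum => y; rewrite eq_sym => xy.
have [->|Lxy_neq0] := eqVneq (L x y) 0; first by rewrite mul0r mulr0.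
have Lxy_gt0 : 0 < L x y by rewrite lt_def Lxy_neq0 L_ge0.
rewrite [X in _ <= X]mulrC; apply: ler_wpM2l; first exact: ltW.
under eq_bigr do rewrite mul1r.
exact: flip_swap_hamming_le2.
Qed.

End FlipSwap.

Lemma sqnorm_ge0 (R : realType) (n : nat) (alpha : 'I_n -> R) : 0 <= sqnorm alpha.
Proof. by apply: sumr_ge0 => i _; exact: sqr_ge0. Qed.

Lemma top_sqsum_ge0 (R : realType) (n : nat) (alpha : 'I_n -> R) (k : nat) :
  0 <= top_sqsum alpha k.
Proof. by apply: sumr_ge0 => a _; exact: sqr_ge0. Qed.

Section TopSquares.
Variables (R : realType) (n : nat) (alpha : 'I_n -> R).
Hypothesis alpha_ge0 : forall i, 0 <= alpha i.

Let s := sort (fun a b : R => b <= a) [seq alpha i | i : 'I_n].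

Let perm_s : perm_eq s [seq alpha i | i : 'I_n].
Proof. by rewrite perm_sort. Qed.

Let size_s : size s = n.
Proof. by rewrite (perm_size perm_s) size_map size_enum_ord. Qed.

Let sum_s (G : R -> R) : \sum_i G (alpha i) = \sum_(0 <= j < n) G s`_j.
Proof.
rewrite (_ : \sum_(0 <= j < n) G s`_j = \sum_(a <- s) G a); last by rewrite [RHS](big_nth 0) size_s.
by rewrite (perm_big _ perm_s) big_map big_enum.
Qed.

Let s_ge0 j : 0 <= s`_j.
Proof.
have [js|js] := ltnP j (size s); last by rewrite nth_default.
by have := mem_nth 0 js; rewrite (perm_mem perm_s) => /mapP[i _ ->].
Qed.

Let s_nonincr i j : (i <= j)%N -> s`_j <= s`_i.
Proof.
move=> ij; have [jn|jn] := ltnP j n; last by rewrite nth_default ?size_s.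
have tr : transitive (fun a b : R => b <= a) by move=> a b c ba cb; exact: le_trans cb ba.
have st : sorted (fun a b : R => b <= a) s by apply: sort_sorted => a b; exact: le_total.
by apply: (sorted_leq_nth tr (fun a => lexx a) 0 st); rewrite // inE size_s // (leq_ltn_trans ij).
Qed.

Let top_sqsum_nth k : (k <= n)%N -> top_sqsum alpha k = \sum_(0 <= j < k) s`_j ^+ 2.
Proof.
move=> kn; rewrite /top_sqsum -/s (big_nth 0) size_takel ?size_s //.
by apply: eq_big_nat => j /andP[_ jk]; rewrite nth_take.
Qed.

Lemma top_sqsum_oversize k : (n <= k)%N -> top_sqsum alpha k = sqnorm alpha.
Proof.
move=> nk; rewrite /top_sqsum -/s take_oversize ?size_s // (big_nth 0) size_s.
by rewrite /sqnorm (sum_s (fun a => a ^+ 2)).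
Qed.

Let sq_nonincr i j : (i <= j)%N -> s`_j ^+ 2 <= s`_i ^+ 2.
Proof. by move=> ij; rewrite lerXn2r ?nnegrE ?s_ge0 ?s_nonincr. Qed.

Let sum_max_sub_nth k : (k < n)%N ->
  \sum_i Num.max (alpha i ^+ 2 - s`_k ^+ 2) 0 = top_sqsum alpha k - k%:R * s`_k ^+ 2.
Proof.
move=> kn; rewrite (sum_s (fun a => Num.max (a ^+ 2 - s`_k ^+ 2) 0)).
rewrite (big_cat_nat (n := k) (leq0n _) (ltnW kn)) /=.
rewrite [X in _ + X]big1_seq ?addr0 => [|j]; last first.
  by move=> /andP[_]; rewrite mem_index_iota => /andP[kj _]; rewrite max_r // subr_le0 sq_nonincr.
have -> : k%:R * s`_k ^+ 2 = \sum_(0 <= j < k) s`_k ^+ 2.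
  by rewrite sumr_const_nat subn0 mulr_natl.
rewrite (top_sqsum_nth (ltnW kn)) -sumrB; apply: eq_big_nat => j /andP[_ jk].
by rewrite max_l // subr_ge0; apply: sq_nonincr; exact: ltnW.
Qed.

Let mul_nth_le_top_sqsum k : (k <= n)%N -> k%:R * s`_k ^+ 2 <= top_sqsum alpha k.
Proof.
move=> kn; rewrite top_sqsum_nth // mulr_natl -[k in _ *+ k]subn0 -sumr_const_nat.
by apply: ler_sum_nat => j /andP[_ jk]; rewrite sq_nonincr // ltnW.
Qed.

Lemma sum_sq_mul_le_top_sqsum (w : 'I_n -> R) (M : R) (k : nat) : 0 <= M ->
  (forall i, 0 <= w i <= M) -> \sum_i w i <= 2 * (k%:R * M) ->
  \sum_i alpha i ^+ 2 * w i <= 2 * M * top_sqsum alpha k.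
Proof.
move=> M0 w_bd w_sum; have [nk|kn] := leqP n k.
  rewrite top_sqsum_oversize // /sqnorm !mulr_sumr; apply: ler_sum => i _.
  by case/andP: (w_bd i) => w0 wM; have := sqr_ge0 (alpha i); nra.
(* With [tau] the square of the (k+1)-th largest entry, the entries above [tau]
   pay their excess at rate at most [M], and every entry pays [tau] at a total
   rate of at most [2 k M]. *)
set tau := s`_k ^+ 2.
have excess : \sum_i alpha i ^+ 2 * w i
    <= M * (top_sqsum alpha k - k%:R * tau) + tau * \sum_i w i.
  rewrite -sum_max_sub_nth // mulr_sumr mulr_sumr -big_split /=.
  by apply: ler_sum => i _; exact: mul_le_max_sub.
apply: le_trans excess _.
have := mul_nth_le_top_sqsum (ltnW kn); have := sqr_ge0 s`_k; rewrite -/tau; nra.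
Qed.

End TopSquares.

Lemma concentration_of_weighted_rate (R : realType) (n : nat) (pi : cube n -> R)
    (L : cube n -> cube n -> R) (rho K : R) (f : cube n -> R) (alpha : 'I_n -> R) :
  is_prob pi -> is_generator L -> reversible pi L -> flip_swap L ->
  mlsi pi L rho -> 0 < rho -> 0 <= K ->
  (forall x y, `|f x - f y| <= d_alpha alpha x y) ->
  (forall x, 0 < pi x -> weighted_rate L alpha x <= rho * K) ->
  forall t, 0 < t -> prob_gt pi f (mean pi f + t) <= expR (- (t ^+ 2 / (8 * K))).
Proof.
move=> pi_prob L_gen L_rev L_fs ml rho0 K0 lip rate_le t t0.
rewrite (_ : 8 * K = 4 * (2 * K)); last by ring.
apply: (concentration_of_local_energy pi_prob L_gen L_rev ml rho0) => //; first exact: mulr_ge0.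
move=> x px; apply: le_trans (local_energy_le L_gen L_fs lip x) _.
by rewrite mulrCA ler_pM2l // rate_le.
Qed.

Section Stability.
Variables (R : realType) (n : nat) (pi : cube n -> R) (L : cube n -> cube n -> R).
Variables (rho Rs : R) (alpha : 'I_n -> R).
Hypotheses (L_gen : is_generator L) (L_fs : flip_swap L) (Rs_ge0 : 0 <= Rs)
  (L_stable : stable pi L rho Rs) (alpha_ge0 : forall i, 0 <= alpha i).

Let rho_gt0 : 0 < rho := L_stable.1.

Let change_rate_le x : 0 < pi x -> forall i, 0 <= change_rate L x i <= Rs * rho.
Proof. by move=> px i; rewrite change_rate_ge0 //= L_stable.2. Qed.

Lemma weighted_rate_le_sqnorm x : 0 < pi x ->
  weighted_rate L alpha x <= rho * (Rs * sqnorm alpha).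
Proof.
move=> px; rewrite /weighted_rate /sqnorm !mulr_sumr; apply: ler_sum => i _.
have /andP[_ rate_le] := change_rate_le px i.
rewrite [X in _ <= X](_ : _ = alpha i ^+ 2 * (Rs * rho)); last by ring.
by apply: ler_wpM2l; first exact: sqr_ge0.
Qed.

Lemma weighted_rate_le_top_sqsum x : 0 < pi x ->
  weighted_rate L alpha x <=
  rho * (2 * Rs * top_sqsum alpha `|Num.ceil (Delta L / (Rs * rho))|%N).
Proof.
move=> px; set k := `|Num.ceil _|%N.
have M_ge0 : 0 <= Rs * rho := mulr_ge0 Rs_ge0 (ltW rho_gt0).
rewrite [X in _ <= X](_ : _ = 2 * (Rs * rho) * top_sqsum alpha k); last by ring.
apply: sum_sq_mul_le_top_sqsum => //; first exact: change_rate_le.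
have [M_eq0|M_neq0] := eqVneq (Rs * rho) 0.
  rewrite M_eq0 !mulr0; apply: sumr_le0 => i _.
  by have /andP[_] := change_rate_le px i; rewrite M_eq0.
have M_gt0 : 0 < Rs * rho by rewrite lt_def M_neq0 M_ge0.
apply: le_trans (sum_change_rate_le L_gen L_fs x) _; rewrite ler_pM2l //.
have Lxx_le : - L x x <= Delta L := le_bigmax _ _ x.
apply: le_trans Lxx_le _.
rewrite -ler_pdivrMr // /k natr_absz ger0_norm ?ceil_ge // ceil_ge0.
by apply: lt_le_trans (ltrN10 R) (divr_ge0 (bigmax_ge_id _ _ _ _) M_ge0).
Qed.

End Stability.

Theorem proposition4p7 (R : realType) (n : nat) (pi : cube n -> R)
  (L : cube n -> cube n -> R) (rho Rs : R) (f : cube n -> R) (alpha : 'I_n -> R) :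
  is_prob pi -> is_generator L -> reversible pi L -> flip_swap L ->
  is_mlsi_const pi L rho -> 0 <= Rs -> stable pi L rho Rs ->
  (forall i, 0 <= alpha i) ->
  (forall x y, `|f x - f y| <= d_alpha alpha x y) ->
  forall t : R, 0 < t ->
    prob_gt pi f (mean pi f + t) <= expR (- (t ^+ 2 / (8 * Rs * sqnorm alpha)))
    /\
    prob_gt pi f (mean pi f + t)
      <= expR (- (t ^+ 2 / (16 * Rs *
            top_sqsum alpha `|Num.ceil (Delta L / (Rs * rho))|%N))).
Proof.
move=> pi_prob L_gen L_rev L_fs [ml _] Rs_ge0 L_stable alpha_ge0 lip t t0.
have tail := concentration_of_weighted_rate pi_prob L_gen L_rev L_fs ml L_stable.1.
split.
- rewrite -mulrA; apply: tail lip _ t t0; first by rewrite mulr_ge0 ?sqnorm_ge0.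
  exact: weighted_rate_le_sqnorm.
- set k := `|Num.ceil _|%N.
  rewrite (_ : 16 * Rs * _ = 8 * (2 * Rs * top_sqsum alpha k)); last by ring.
  apply: tail lip _ t t0; first by rewrite !mulr_ge0 ?top_sqsum_ge0.
  exact: weighted_rate_le_top_sqsum.
Qed.
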